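(* For any hypergraph PIN model on a $t$-uniform hypergraph $\mathcal H=(\mathcal M,\mathcal E)$, any $n\in\mathbb N$, and any function $\mathbf L$ of $X^n_{\mathcal M}$, $$\sum_{i=1}^m I(X_i^n;\mathbf L)\le t\,H(\mathbf L).$$
   Context: Let $\mathcal M=\{1,\dots,m\}$. A hypergraph PIN model is defined from a hypergraph $\mathcal H=(\mathcal M,\mathcal E)$, where $\mathcal E$ is a finite multiset of subsets (hyperedges) of $\mathcal M$. For $n\in\mathbb N$, $\mathcal E^{(n)}$ is the multiset with $n$ copies of each element of $\mathcal E$. Each $e\in\mathcal E^{(n)}$ carries an independent Bernoulli(1/2) random variable $\xi_e$, and $X^n_i=(\xi_e:e\in\mathcal E^{(n)},\ i\in e)$, with $X^n_{\mathcal M}=(X^n_1,\dots,X^n_m)$. $\mathcal H$ is $t$-uniform if every hyperedge has exactly $t$ elements. *)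

From mathcomp Require Import all_boot.
From Stdlib Require Import Reals.

Set Implicit Arguments.
Unset Strict Implicit.
Unset Printing Implicit Defensive.

Definition rsum (A : finType) (f : A -> R) : R := \big[Rplus/0%R]_(a : A) f a.

Definition log2 (x : R) : R := (ln x / ln 2)%R.

Section Info.
Variable Omega : finType.

Definition pmf (A : finType) (X : Omega -> A) (a : A) : R :=
  (INR #|[set w : Omega | X w == a]| / INR #|Omega|)%R.

(* Shannon entropy (bits), with 0 log 0 = 0 (automatic since 0 * _ = 0). *)
Definition entropy (A : finType) (X : Omega -> A) : R :=
  (- rsum (fun a : A => pmf X a * log2 (pmf X a)))%R.

Definition pairRV (A B : finType) (X : Omega -> A) (Y : Omega -> B) :
  Omega -> A * B := fun w => (X w, Y w).

Definition mutinfo (A B : finType) (X : Omega -> A) (Y : Omega -> B) : R :=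
  (entropy X + entropy Y - entropy (pairRV X Y))%R.
End Info.

(* A hypergraph on M = 'I_m is a finite multiset of hyperedges, given as a
   list E : seq {set 'I_m}.  The multiset E^(n) is indexed by pairs
   (j, c) : 'I_(size E) * 'I_n  (hyperedge number j, copy number c). *)
Definition hedge_idx (m : nat) (E : seq {set 'I_m}) (n : nat) : finType :=
  ('I_(size E) * 'I_n)%type.

(* Sample space: the independent uniform bits (xi_e) for e in E^(n). *)
Definition pin_space (m : nat) (E : seq {set 'I_m}) (n : nat) : finType :=
  {ffun hedge_idx E n -> bool}.

Definition hedge_of (m : nat) (E : seq {set 'I_m}) (n : nat)
  (e : hedge_idx E n) : {set 'I_m} := nth set0 E (val e.1).

(* Value space of X_i^n: the tuple (xi_e : i in e), encoded as a finite
   function giving Some xi_e on the hyperedges containing i and None elsewhere. *)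
Definition obs_space (m : nat) (E : seq {set 'I_m}) (n : nat) : finType :=
  {ffun hedge_idx E n -> option bool}.

Definition pinX (m : nat) (E : seq {set 'I_m}) (n : nat) (i : 'I_m)
  (xi : pin_space E n) : obs_space E n :=
  [ffun e => if i \in hedge_of e then Some (xi e) else None].

Definition pinXM (m : nat) (E : seq {set 'I_m}) (n : nat)
  (xi : pin_space E n) : {ffun 'I_m -> obs_space E n} :=
  [ffun i => pinX i xi].

Definition uniform_hg (m : nat) (E : seq {set 'I_m}) (t : nat) : bool :=
  all (fun e : {set 'I_m} => #|e| == t) E.

From mathcomp Require Import all_boot.
From Stdlib Require Import Reals.
From mathcomp Require all_order all_algebra Rstruct ring lra.

Set Implicit Arguments.
Unset Strict Implicit.
Unset Printing Implicit Defensive.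

(* On the uniform space of the hyperedge bits, X_i is the restriction of the
   bits to the set S_i of hyperedge copies containing i.  For the restriction
   X_A to any set A of bits, H(X_A) = |A|, and A |-> H(X_A, L) is submodular
   (Gibbs' inequality, via ln x <= x - 1), so F(A) := I(X_A; L) = |A| + H(L) - H(X_A, L) is supermodular, with
   F(empty) = 0 and F(all bits) = H(L).  Every bit lies in exactly t of the
   S_i by t-uniformity, and adding the bits one at a time to a common set U
   shows sum_i F(S_i & U) <= t F(U), a Shearer-type inequality. *)

(* MathComp's algebra is imported only inside this module: its [%R] delimiter
   would otherwise reinterpret the Stdlib-real statement of [lemma4].
   [all_boot] is imported again so that the nat notations refer to ssrnat
   rather than to the Peano ones re-exported by [Reals]. *)
Module PinEntropy.
Import all_boot all_order all_algebra GRing.Theory Num.Theory Order.TTheory Rstruct ring lra.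
Local Open Scope ring_scope.

Lemma lnM (x y : R) : 0 < x -> 0 < y -> ln (x * y) = ln x + ln y.
Proof. by move=> /RltP x0 /RltP y0; rewrite -!RealsE ln_mult. Qed.

Lemma lnV (x : R) : 0 < x -> ln (x^-1) = - ln x.
Proof. by move=> /RltP x0; rewrite -!RealsE ln_Rinv. Qed.

Lemma lnXn (x : R) n : 0 < x -> ln (x ^+ n) = n%:R * ln x.
Proof. by move=> /RltP x0; rewrite -!RealsE ln_pow. Qed.

Lemma ln_le_subr1 (x : R) : 0 < x -> ln x <= x - 1.
Proof.
move=> /RltP x0; have /RleP := exp_ineq1_le (ln x).
by rewrite exp_ln // RplusE R1E; lra.
Qed.

Lemma ln2_gt0 : 0 < ln 2 :> R.
Proof. by have /RltP := ln_lt_2; apply: lt_trans; rewrite invr_gt0 (ltr0n R 2). Qed.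

Section Entropy.
Variable Omega : finType.
Implicit Types A B : finType.

Local Notation N := (#|Omega|%:R : R).

Definition fiber A (X : Omega -> A) (w : Omega) : nat := #|[set u | X u == X w]|.

Definition sum_ln_fiber A (X : Omega -> A) : R := \sum_w ln (fiber X w)%:R.

Lemma fiber_gt0 A (X : Omega -> A) w : (0 < fiber X w)%N.
Proof. by apply/card_gt0P; exists w; rewrite inE. Qed.

Lemma fiberR_gt0 A (X : Omega -> A) w : 0 < (fiber X w)%:R :> R.
Proof. by rewrite ltr0n fiber_gt0. Qed.

Lemma fiberE A (X : Omega -> A) w : (fiber X w)%:R = \sum_(u | X u == X w) 1 :> R.
Proof. by rewrite sumr_const; congr (_ *+ _); apply: eq_card => u; rewrite inE. Qed.

Lemma eq_fiber A (X : Omega -> A) w w' : X w = X w' -> fiber X w = fiber X w'.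
Proof. by rewrite /fiber => ->. Qed.

Lemma sum_fiber_inv A (X : Omega -> A) w0 :
  \sum_(w | X w == X w0) ((fiber X w)%:R)^-1 = 1 :> R.
Proof.
rewrite (eq_bigr (fun _ => ((fiber X w0)%:R)^-1)) => [|w /eqP/eq_fiber -> //].
rewrite sumr_const.
have -> : #|[pred w | X w == X w0]| = fiber X w0 by apply: eq_card => w; rewrite !inE.
by rewrite -[_ *+ fiber X w0]mulr_natr mulVf // lt0r_neq0 // fiberR_gt0.
Qed.

Lemma sum_ln_fiber_ker A B (X : Omega -> A) (Y : Omega -> B) :
  (forall w w', X w = X w' <-> Y w = Y w') -> sum_ln_fiber X = sum_ln_fiber Y.
Proof.
move=> XY; apply: eq_bigr => w _; congr (ln _%:R).
by apply: eq_card => u; rewrite !inE; apply/eqP/eqP => /XY.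
Qed.

Lemma entropyE A (X : Omega -> A) :
  entropy X = (N * ln N - sum_ln_fiber X) / (N * ln 2).
Proof.
pose c a := #|[set w | X w == a]|.
have sum_fiber (g : A -> R) : \sum_w g (X w) = \sum_a (c a)%:R * g a.
  rewrite (partition_big X xpredT) //=; apply: eq_bigr => a _.
  rewrite (eq_bigr (fun _ => g a)) => [|w /eqP -> //].
  by rewrite sumr_const mulr_natl; congr (_ *+ _); apply: eq_card => w; rewrite inE.
have term a : pmf X a * log2 (pmf X a) = (c a)%:R * ((ln (c a)%:R - ln N) / (N * ln 2)).
  rewrite /pmf /log2 !INRE !RdivE -/(c a).
  have [->|c_gt0] := posnP (c a); first by rewrite !mul0r.
  have N_gt0 : 0 < N by rewrite ltr0n (leq_trans c_gt0) ?max_card.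
  rewrite lnM ?invr_gt0 ?N_gt0 ?ltr0n // lnV // invfM.
  by rewrite !mulrA [_ / N * _]mulrAC.
rewrite /entropy /rsum RoppE.
rewrite (eq_bigr _ (fun a _ => term a)) -sum_fiber -mulr_suml sumrB sumr_const.
by rewrite -[ln _ *+ _]mulr_natl -mulNr opprB.
Qed.

Lemma entropy_ker A B (X : Omega -> A) (Y : Omega -> B) :
  (forall w w', X w = X w' <-> Y w = Y w') -> entropy X = entropy Y.
Proof. by move=> XY; rewrite !entropyE (sum_ln_fiber_ker XY). Qed.

Lemma eq_entropy A (X Y : Omega -> A) : X =1 Y -> entropy X = entropy Y.
Proof. by move=> XY; apply: entropy_ker => w w'; rewrite !XY. Qed.

Lemma eq_mutinfo A B (X Y : Omega -> A) (Z : Omega -> B) :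
  X =1 Y -> mutinfo X Z = mutinfo Y Z.
Proof.
move=> XY; rewrite /mutinfo (eq_entropy XY).
by rewrite (@eq_entropy _ (pairRV X Z) (pairRV Y Z)) // => w; rewrite /pairRV XY.
Qed.

Section Submodularity.
Variables (A1 A2 B : finType) (P1 : Omega -> A1) (P2 : Omega -> A2) (Z : Omega -> B).
Hypotheses (P1Z : forall w w', P1 w = P1 w' -> Z w = Z w')
           (P2Z : forall w w', P2 w = P2 w' -> Z w = Z w').

Local Notation P := (pairRV P1 P2).

Let weight w : R := ((fiber P w * fiber Z w)%:R)^-1.

(* The points agreeing with u on P1 and with v on P2 form at most one
   P-fiber, and it lies in the Z-fiber of both u and v. *)
Lemma sum_weight_joint_le u v :
  \sum_(w | (P1 u == P1 w) && (P2 v == P2 w)) weight w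
  <= if Z v == Z u then ((fiber Z v)%:R)^-1 else 0.
Proof.
case: (pickP [pred w | (P1 u == P1 w) && (P2 v == P2 w)]) => [w0 | none]; last first.
  by rewrite big_pred0 //; case: ifP; rewrite ?invr_ge0 ?ler0n.
move=> /andP[/eqP u1 /eqP v2].
have Zu : Z u = Z w0 by exact: P1Z.
have Zv : Z v = Z w0 by exact: P2Z.
have -> : Z v == Z u by rewrite Zu Zv.
rewrite (eq_bigl [pred w | P w == P w0]) => [|w]; last first.
  by rewrite /= /pairRV xpair_eqE u1 v2 ![_ == P1 w]eq_sym ![_ == P2 w]eq_sym.
rewrite (eq_bigr (fun w => ((fiber P w)%:R)^-1 / (fiber Z v)%:R)) => [|w /eqP [/P1Z Zw _]].
  by rewrite -mulr_suml sum_fiber_inv mul1r.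
by rewrite /weight natrM invfM (eq_fiber Zw) (eq_fiber Zv).
Qed.

Lemma sum_fiber_ratio_le :
  \sum_w (fiber P1 w * fiber P2 w)%:R * weight w <= N.
Proof.
have expand w : (fiber P1 w * fiber P2 w)%:R * weight w =
    \sum_u \sum_v (if (P1 u == P1 w) && (P2 v == P2 w) then weight w else 0).
  rewrite natrM !fiberE !mulr_suml big_mkcond; apply: eq_bigr => u _.
  rewrite eq_sym; case: eqP => _ /=; last by rewrite big1.
  rewrite mul1r mulr_suml big_mkcond; apply: eq_bigr => v _.
  by rewrite eq_sym; case: eqP; rewrite ?mul1r.
rewrite (eq_bigr _ (fun w _ => expand w)) exchange_big /=.
under eq_bigr do rewrite exchange_big /=.
have -> : N = \sum_(u : Omega) 1 by rewrite sumr_const.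
apply: ler_sum => u _.
rewrite -(sum_fiber_inv Z u) [leRHS]big_mkcond; apply: ler_sum => v _.
rewrite -big_mkcond; exact: sum_weight_joint_le.
Qed.

Lemma sum_ln_fiber_submod :
  sum_ln_fiber P1 + sum_ln_fiber P2 <= sum_ln_fiber P + sum_ln_fiber Z.
Proof.
have ln_ratio w :
    ln (fiber P1 w)%:R + ln (fiber P2 w)%:R - (ln (fiber P w)%:R + ln (fiber Z w)%:R)
    = ln ((fiber P1 w * fiber P2 w)%:R * weight w).
  have k_gt0 := fiberR_gt0.
  rewrite /weight !natrM invfM !lnM ?mulr_gt0 ?invr_gt0 // !lnV //; lra.
suff : \sum_w (ln (fiber P1 w)%:R + ln (fiber P2 w)%:R
                 - (ln (fiber P w)%:R + ln (fiber Z w)%:R)) <= 0.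
  by rewrite sumrB !big_split /= /sum_ln_fiber; lra.
under eq_bigr do rewrite ln_ratio.
apply: le_trans (_ : \sum_w ((fiber P1 w * fiber P2 w)%:R * weight w - 1) <= _).
  apply: ler_sum => w _.
  by rewrite ln_le_subr1 ?mulr_gt0 ?invr_gt0 ?ltr0n ?muln_gt0 ?fiber_gt0.
by rewrite sumrB sumr_const subr_le0 sum_fiber_ratio_le.
Qed.

Lemma entropy_submod : entropy P + entropy Z <= entropy P1 + entropy P2.
Proof.
rewrite !entropyE -!mulrDl; apply: ler_wpM2r.
  by rewrite invr_ge0 mulr_ge0 ?ler0n ?ltW ?ln2_gt0.
by have := sum_ln_fiber_submod; lra.
Qed.

End Submodularity.

End Entropy.

Section IndependentBits.
Variable J : finType.
Local Notation Omega := {ffun J -> bool}.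
Implicit Types (S : {set J}) (w : Omega).

Definition restr (S : {set J}) (w : Omega) : {ffun J -> option bool} :=
  [ffun e => if e \in S then Some (w e) else None].

Lemma restr_eqP S w w' : reflect {in S, w =1 w'} (restr S w == restr S w').
Proof.
apply: (iffP eqP) => [eq_ww' e eS | ww'].
  by have /ffunP/(_ e) := eq_ww'; rewrite !ffunE eS => -[].
by apply/ffunP => e; rewrite !ffunE; case: ifP => // /ww' ->.
Qed.

Lemma fiber_restr S w : fiber (restr S) w = (2 ^ #|~: S|)%N.
Proof.
pose F e : pred bool := if e \in S then pred1 (w e) else predT.
have -> : fiber (restr S) w = #|(finfun.family F : simpl_pred Omega)|.
  apply: eq_card => u; rewrite inE; apply/restr_eqP/familyP => [uw e | uw e eS].
    by rewrite /F; case: ifP => // /uw ->; rewrite inE.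
  by move: (uw e); rewrite /F eS => /eqP.
rewrite card_family foldrE big_map big_enum (bigID (mem S)) /=.
rewrite big1 => [|e eS]; last by rewrite /F eS card1.
rewrite mul1n (eq_bigr (fun _ => 2%N)) => [|e eS]; last first.
  by rewrite /F (negbTE eS) card_bool.
by rewrite prod_nat_const; apply: (congr1 (expn 2)); apply: eq_card => e; rewrite !inE.
Qed.

Lemma entropy_restr S : entropy (restr S) = #|S|%:R.
Proof.
rewrite entropyE /sum_ln_fiber.
under eq_bigr do rewrite fiber_restr.
rewrite sumr_const -[ln _ *+ _]mulr_natl card_ffun card_bool !natrX !lnXn ?ltr0n //.
rewrite -(cardsC S) natrD; field.
by rewrite lt0r_neq0 ?ln2_gt0 // expf_neq0 ?pnatr_eq0.
Qed.

Lemma restr_eq_subset S1 S2 w w' :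
  S1 \subset S2 -> restr S2 w = restr S2 w' -> restr S1 w = restr S1 w'.
Proof.
move=> /subsetP S12 /eqP/restr_eqP ww'; apply/eqP/restr_eqP => e /S12; exact: ww'.
Qed.

Lemma restrU_eq S1 S2 w w' :
  restr (S1 :|: S2) w = restr (S1 :|: S2) w' <->
  restr S1 w = restr S1 w' /\ restr S2 w = restr S2 w'.
Proof.
split=> [eq12 | [/eqP/restr_eqP eq1 /eqP/restr_eqP eq2]].
  by split; apply: restr_eq_subset eq12; rewrite ?subsetUl ?subsetUr.
by apply/eqP/restr_eqP => e; rewrite inE => /orP[/eq1 | /eq2].
Qed.

Lemma restr_setT_inj : injective (restr setT).
Proof. by move=> w w' /eqP/restr_eqP ww'; apply/ffunP => e; apply: ww'; rewrite inE. Qed.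

Lemma restr_set0_const w w' : restr set0 w = restr set0 w'.
Proof. by apply/eqP/restr_eqP => e; rewrite inE. Qed.

Variables (T : finType) (L : Omega -> T).

Lemma entropy_restr_submod A B :
  entropy (pairRV (restr (A :|: B)) L) + entropy (pairRV (restr (A :&: B)) L)
  <= entropy (pairRV (restr A) L) + entropy (pairRV (restr B) L).
Proof.
rewrite -(@entropy_ker _ _ _ (pairRV (pairRV (restr A) L) (pairRV (restr B) L))).
  apply: entropy_submod => w w' [eqS eqL]; rewrite /pairRV eqL;
    by rewrite (restr_eq_subset _ eqS) ?subsetIl ?subsetIr.
move=> w w'; rewrite /pairRV; split.
  by case=> eqA eqL eqB _; rewrite eqL (proj2 (restrU_eq _ _ _ _) (conj eqA eqB)).
by case=> /restrU_eq[-> ->] ->.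
Qed.

Lemma mutinfo_restr_supermod A B :
  mutinfo (restr A) L + mutinfo (restr B) L
  <= mutinfo (restr (A :|: B)) L + mutinfo (restr (A :&: B)) L.
Proof.
have /(congr1 (fun k => k%:R : R)) := cardsUI A B; rewrite !natrD.
rewrite /mutinfo !RminusE !RplusE !entropy_restr.
by have := entropy_restr_submod A B; lra.
Qed.

Lemma mutinfo_restr0 : mutinfo (restr set0) L = 0.
Proof.
rewrite /mutinfo entropy_restr cards0 (@entropy_ker _ _ _ _ L) => [|w w'].
  by rewrite RminusE RplusE add0r subrr.
by rewrite /pairRV (restr_set0_const w w'); split=> [[]|->].
Qed.

Lemma mutinfo_restrT : mutinfo (restr setT) L = entropy L.
Proof.
rewrite /mutinfo (@entropy_ker _ _ _ (pairRV (restr setT) L) (restr setT)) => [|w w'].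
  by rewrite RminusE RplusE addrAC subrr add0r.
by rewrite /pairRV; split=> [[]|/restr_setT_inj ->].
Qed.

End IndependentBits.

Section SupermodularCover.
Variables (K : realDomainType) (J I : finType) (F : {set J} -> K).
Variables (S : I -> {set J}) (t : nat).
Hypothesis F0 : F set0 = 0.
Hypothesis F_supermod : forall A B, F A + F B <= F (A :|: B) + F (A :&: B).
Hypothesis S_regular : forall e, #|[set i | e \in S i]| = t.

Lemma supermodular_sum_setI_le U : \sum_i F (S i :&: U) <= t%:R * F U.
Proof.
elim: {U}#|U| {-2}U (erefl #|U|) => [|k IH] U cardU.
  move/eqP: cardU; rewrite cards_eq0 => /eqP ->.
  by rewrite big1 ?F0 ?mulr0 // => i _; rewrite setI0 F0.
have /card_gt0P[e Ue] : (0 < #|U|)%N by rewrite cardU.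
set V := U :\ e.
(* Supermodularity for S i :&: U and V: adding e to V gains at least as much
   as adding it to the smaller set S i :&: V. *)
have step i : F (S i :&: U) <= F (S i :&: V) + (e \in S i)%:R * (F U - F V).
  have [eS | eS] := boolP (e \in S i); last first.
    rewrite mul0r addr0 (_ : S i :&: U = S i :&: V) //.
    by apply/setP => x; rewrite !inE; case: eqVneq => [->|]; rewrite ?(negbTE eS).
  have := F_supermod (S i :&: U) V.
  rewrite -setIA (setIidPr (subsetDl U [set e])) (_ : S i :&: U :|: V = U).
    by rewrite mul1r; lra.
  apply/setP => x; rewrite !inE; case: eqVneq => [->|_] /=; first by rewrite eS Ue.
  by apply: orb_idl => /andP[].
apply: le_trans (ler_sum _ (fun i _ => step i)) _.
have deg_e : (\sum_i (e \in S i))%N = t.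
  by rewrite -(S_regular e) -sum1_card [RHS]big_mkcond; apply: eq_bigr => i _; rewrite inE.
have cardV : #|V| = k by rewrite (cardsD1 e U) Ue in cardU; case: cardU.
have := IH V cardV.
by rewrite big_split /= -mulr_suml -natr_sum deg_e mulrBr; lra.
Qed.

Lemma supermodular_sum_le : \sum_i F (S i) <= t%:R * F setT.
Proof. by have := supermodular_sum_setI_le setT; under eq_bigr do rewrite setIT. Qed.

End SupermodularCover.

Theorem sum_mutinfo_restr_le (J I T : finType) (L : {ffun J -> bool} -> T)
    (S : I -> {set J}) (t : nat) :
  (forall e, #|[set i | e \in S i]| = t) ->
  \sum_i mutinfo (restr (S i)) L <= t%:R * entropy L.
Proof.
move=> S_regular; rewrite -(mutinfo_restrT L).
apply: (supermodular_sum_le (F := fun A => mutinfo (restr A) L)) S_regular.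
  exact: mutinfo_restr0.
exact: mutinfo_restr_supermod.
Qed.

Lemma pinX_restr m (E : seq {set 'I_m}) n (i : 'I_m) :
  pinX (E := E) (n := n) i =1 restr [set e | i \in hedge_of e].
Proof. by move=> xi; apply/ffunP => e; rewrite !ffunE inE. Qed.

Lemma uniform_hg_regular m (E : seq {set 'I_m}) n t : uniform_hg E t ->
  forall e : hedge_idx E n, #|[set i | e \in [set e' | i \in hedge_of e']]| = t.
Proof.
move=> /allP E_unif e; have /E_unif/eqP <- : hedge_of e \in E by exact/mem_nth/ltn_ord.
by apply: eq_card => i; rewrite !inE.
Qed.

End PinEntropy.

Theorem lemma4 (m t : nat) (E : seq {set 'I_m}) (n : nat)
  (T : finType) (L : {ffun 'I_m -> obs_space E n} -> T) :
  uniform_hg E t ->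
  (rsum (fun i : 'I_m =>
           mutinfo (pinX (n := n) i) (fun xi => L (pinXM xi)))
   <= INR t * entropy (fun xi : pin_space E n => L (pinXM xi)))%R.
Proof.
move=> E_unif; apply/Rstruct.RleP; rewrite Rstruct.INRE /rsum.
under eq_bigr do rewrite (PinEntropy.eq_mutinfo _ (@PinEntropy.pinX_restr _ _ _ _)).
exact: PinEntropy.sum_mutinfo_restr_le (PinEntropy.uniform_hg_regular E_unif).
Qed.
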